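(* Let $l\ge2$ and $a,b\in\mathbb{Z}_{2l}$ be such that $X=X(\mathbb{Z}_{2l},\{\pm a,\pm b\})$ is a connected $4$-regular circulant graph, and assume $a+b=l$. If $l\equiv0\pmod4$, then $X$ does not admit perfect state transfer between (distinct) vertex type states.
   Context: For $S\subseteq\mathbb{Z}_n\setminus\{0\}$ with $S=-S$, $X(\mathbb{Z}_n,S)$ has vertex set $\mathbb{Z}_n$ and edges $\{x,y\}$ with $y-x\in S$. For a graph with symmetric arc set $\mathcal{A}$ ($t((x,y))=y$, $(x,y)^{-1}=(y,x)$): boundary matrix $d_{x,a}=\frac{1}{\sqrt{\deg x}}\delta_{x,t(a)}$, shift matrix $R_{a,b}=\delta_{a,b^{-1}}$, $U=R(2d^*d-I_{\mathcal{A}})$; $d^*e_x$ ($e_x$ the standard unit vector) is a vertex type state. Perfect state transfer from $\Phi$ to a distinct state $\Psi$ means $U^\tau\Phi=\gamma\Psi$ for some $\tau\in\mathbb{Z}_{\ge1}$ and $|\gamma|=1$. *)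

From HB Require Import structures.
From mathcomp Require Import all_boot all_order all_algebra.
Set Implicit Arguments. Unset Strict Implicit. Unset Printing Implicit Defensive.
Import Order.TTheory GRing.Theory Num.Theory.
Local Open Scope ring_scope.

Definition cadj (n : nat) (S : {set 'Z_n}) : rel 'Z_n :=
  fun x y => (y - x) \in S.

Definition cdeg (n : nat) (S : {set 'Z_n}) (x : 'Z_n) : nat :=
  #|[set y | cadj S x y]|.

Definition cconnected (n : nat) (S : {set 'Z_n}) : bool :=
  [forall x, [forall y, connect (cadj S) x y]].

Definition arc (n : nat) (S : {set 'Z_n}) := {e : 'Z_n * 'Z_n | cadj S e.1 e.2}.

Definition arc_t (n : nat) (S : {set 'Z_n}) (e : arc S) : 'Z_n := (val e).2.

(* (x,y)^{-1} = (y,x); insubd falls back to e only if (y,x) is not an arc,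
   which never happens when S = -S. *)
Definition arc_inv (n : nat) (S : {set 'Z_n}) (e : arc S) : arc S :=
  insubd e ((val e).2, (val e).1).

Section Walk.
Variables (C : numClosedFieldType) (n : nat) (S : {set 'Z_n}).

Definition bd (x : 'Z_n) (e : arc S) : C :=
  (arc_t e == x)%:R / sqrtC (cdeg S x)%:R.

Definition dmul (g : arc S -> C) : 'Z_n -> C :=
  fun x => \sum_(e : arc S) bd x e * g e.

Definition dstar (f : 'Z_n -> C) : arc S -> C :=
  fun e => \sum_(x : 'Z_n) (bd x e)^* * f x.

Definition shiftR (g : arc S -> C) : arc S -> C :=
  fun e => g (arc_inv e).

Definition Uop (g : arc S -> C) : arc S -> C :=
  shiftR (fun e => 2 * dstar (dmul g) e - g e).

Definition vstate (x : 'Z_n) : arc S -> C :=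
  dstar (fun y => (y == x)%:R).

Definition PST (Phi Psi : arc S -> C) : Prop :=
  exists (tau : nat), (1 <= tau)%N /\
    exists gamma : C, `|gamma| = 1 /\
      forall e, iter tau Uop Phi e = gamma * Psi e.

End Walk.

From Pilot Require Import Defs.
From HB Require Import structures.
From mathcomp Require Import all_boot all_order all_algebra ring zify.
Import Order.TTheory GRing.Theory Num.Theory.

(* Write L for l viewed in Z_2l, so that 2L = 0 and, as a + b = L, 2b = -2a.
   On an arc (w, u), U^t d^*e_x is the sum of a ballistic part
   [2(u - x) = 2t(u - w)]/4 ([free]) and a part (c_t delta(u) + s_t delta(w))/4
   with delta = e_x - e_(x+L) ([bound]), on which U acts as the quarter turn
   (c, s) -> (-s, c).  Adding the values on the two arcs
   (y - a, y) and (y + b, y), whose tails are antipodal, perfect state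
   transfer to y at time t with phase gamma gives
   2 gamma = [2(y - x) = 2ta] - c_t [y = x + L].  As |gamma| = 1 this forces
   c_t = -1, i.e. t = 2 mod 4, y = x + L and hence 2ta = 0; then 2t kills
   every element of S, so by connectivity 2l | 2t, contradicting 4 | l. *)

Set Implicit Arguments.
Unset Strict Implicit.
Unset Printing Implicit Defensive.

Local Open Scope ring_scope.

Section CirculantWalk.
Variables (C : numClosedFieldType) (n : nat) (S : {set 'Z_n}).

Lemma cdegE x : cdeg S x = #|S|.
Proof.
rewrite /cdeg -(card_imset S (addIr x)); congr #|pred_of_set _|.
apply/setP=> y; rewrite inE /cadj; apply/idP/imsetP => [yS|[s sS ->]].
  by exists (y - x); rewrite ?subrK.
by rewrite addrK.
Qed.

Lemma bd_conj (x : 'Z_n) (e : Defs.arc S) : (bd C x e)^* = bd C x e.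
Proof. by rewrite geC0_conj // /bd divr_ge0 ?sqrtC_ge0 ?ler0n. Qed.

Lemma dstarE (f : 'Z_n -> C) (e : Defs.arc S) : dstar f e = f (arc_t e) / sqrtC #|S|%:R.
Proof.
rewrite /dstar (bigD1 (arc_t e)) //= big1 ?addr0 => [|x xn].
  by rewrite bd_conj /bd cdegE eqxx mul1r mulrC.
by rewrite bd_conj /bd eq_sym (negbTE xn) !mul0r.
Qed.

Lemma dmulE (g : Defs.arc S -> C) x :
  dmul g x = (\sum_(e | arc_t e == x) g e) / sqrtC #|S|%:R.
Proof.
rewrite /dmul [in RHS]big_mkcond mulr_suml; apply: eq_bigr => e _.
by rewrite /bd cdegE; case: eqP => _; rewrite ?mul1r ?mul0r // mulrC.
Qed.

Lemma sum_arcs_into (F : 'Z_n -> 'Z_n -> C) u :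
  \sum_(e : Defs.arc S | arc_t e == u) F (val e).1 (val e).2 = \sum_(s in S) F (u - s) u.
Proof.
pose A := [pred p : 'Z_n * 'Z_n | cadj S p.1 p.2].
rewrite -[LHS](big_sub_cond A (fun p => p.2 == u) (fun p => F p.1 p.2)).
rewrite -(pair_big_dep xpredT (fun w v => cadj S w v && (v == u))) /=.
under eq_bigr => w _ do rewrite big_mkcondl big_pred1_eq.
rewrite -big_mkcond (reindex_inj (subrI u)) /=.
by apply: eq_bigl => s; rewrite /cadj subKr.
Qed.

Lemma arc_into u s : s \in S -> exists e : Defs.arc S, val e = (u - s, u).
Proof.
move=> sS; have uS : cadj S (u - s) u by rewrite /cadj subKr.
by exists (Sub (u - s, u) uS).
Qed.

Hypothesis S_oppr : {in S, forall s, - s \in S}.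

Lemma arc_invE (e : Defs.arc S) : val (arc_inv e) = ((val e).2, (val e).1).
Proof.
by rewrite /arc_inv insubdK // unfold_in /cadj /= -opprB S_oppr //; exact: (valP e).
Qed.

Definition Upair (h : 'Z_n -> 'Z_n -> C) (w u : 'Z_n) : C :=
  2 / #|S|%:R * \sum_(s in S) h (w - s) w - h u w.

Lemma UpairD h1 h2 w u :
  Upair (fun w u => h1 w u + h2 w u) w u = Upair h1 w u + Upair h2 w u.
Proof. by rewrite /Upair big_split mulrDr opprD addrACA. Qed.

Lemma Uop_lift (g : Defs.arc S -> C) h :
  (forall e, g e = h (val e).1 (val e).2) ->
  forall e, Uop g e = Upair h (val e).1 (val e).2.
Proof.
move=> gE e; rewrite /Uop /shiftR dstarE dmulE /arc_t arc_invE /= gE arc_invE.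
rewrite (eq_bigr _ (fun e' _ => gE e')) sum_arcs_into /Upair.
by rewrite -mulrA -invfM -expr2 sqrtCK mulrCA mulrC.
Qed.

Lemma iter_Uop_lift (g : Defs.arc S -> C) (h : nat -> 'Z_n -> 'Z_n -> C) :
  (forall e, g e = h 0%N (val e).1 (val e).2) ->
  (forall t w u, u - w \in S -> Upair (h t) w u = h t.+1 w u) ->
  forall t (e : Defs.arc S), iter t (@Uop C n S) g e = h t (val e).1 (val e).2.
Proof.
move=> g0 hS; elim=> [|t IH] e //=.
by rewrite (@Uop_lift _ (h t) IH) hS //; exact: (valP e).
Qed.
End CirculantWalk.

Lemma connected_mulrn_eq0 n (S : {set 'Z_n}) m :
  cconnected S -> {in S, forall s, s *+ m = 0} -> forall z : 'Z_n, z *+ m = 0.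
Proof.
move=> conn Sm z.
have cl : closed (cadj S) [pred z : 'Z_n | z *+ m == 0].
  by move=> w v wv; rewrite !inE -[v](subrK w) mulrnDl (Sm _ wv) add0r.
have := closed_connect cl (forallP (forallP conn 0) z).
by rewrite !inE mul0rn eqxx => /esym/eqP.
Qed.

Lemma Zp_natr_eq0 p k : (1 < p)%N -> ((k%:R : 'Z_p) == 0) = (p %| k)%N.
Proof. by move=> p_gt1; rewrite Zp_nat -(inj_eq val_inj) /= Zp_cast. Qed.

Lemma dvdn_lt_double l v : (v < l.*2)%N -> (l %| v)%N = (v == 0%N) || (v == l).
Proof.
move=> lt_v; apply/idP/idP => [/dvdnP[k vE]|/orP[]/eqP->]; rewrite ?dvdn0 ?dvdnn //.
have : (k < 2)%N by move: lt_v; rewrite vE -muln2; nia.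
by case: k vE => [|[|k]] -> //= _; rewrite mul1n eqxx orbT.
Qed.

Section DoubleModulus.
Variable l : nat.
Hypothesis l_gt0 : (0 < l)%N.
Local Notation L := (l%:R : 'Z_(l.*2)).

Lemma double_gt1 : (1 < l.*2)%N.
Proof. by rewrite -addnn; lia. Qed.

Lemma half_mulrn2 : L *+ 2 = 0.
Proof. by rewrite -mulrnA muln2 pchar_Zp // double_gt1. Qed.

Lemma oppr_half : - L = L.
Proof. by apply/eqP; rewrite eq_sym -subr_eq0 opprK -mulr2n half_mulrn2. Qed.

Lemma half_neq0 : L != 0.
Proof.
rewrite Zp_natr_eq0 ?double_gt1 //; apply/negP => /dvdn_leq.
by rewrite -addnn; lia.
Qed.

Lemma mulrn2_eq0 (z : 'Z_(l.*2)) : (z *+ 2 == 0) = (z == 0) || (z == L).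
Proof.
have lt_z : (z < l.*2)%N by rewrite -[X in (_ < X)%N](Zp_cast double_gt1).
have valL : val L = l.
  by rewrite /= Zp_nat /= Zp_cast ?double_gt1 // modn_small // -addnn; lia.
have dvdn_double k : (l.*2 %| k * 2)%N = (l %| k)%N by rewrite -muln2 dvdn_pmul2r.
rewrite -{1}[z]natr_Zp -mulrnA Zp_natr_eq0 ?double_gt1 // dvdn_double.
by rewrite dvdn_lt_double // -!(inj_eq val_inj) valL.
Qed.

End DoubleModulus.

Section Rotation.
Variable R : pzRingType.

Definition rot (p : R * R) : R * R := (- p.2, p.1).

Lemma iter_rot_fst t :
  let c := (iter t rot (1, 0)).1 in [\/ c = 1, c = 0 | c = -1 /\ (t %% 4 = 2)%N].
Proof.
suff : [\/ iter t rot (1, 0) = (1, 0) /\ (t %% 4 = 0)%N,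
           iter t rot (1, 0) = (0, 1) /\ (t %% 4 = 1)%N,
           iter t rot (1, 0) = (-1, 0) /\ (t %% 4 = 2)%N |
           iter t rot (1, 0) = (0, -1) /\ (t %% 4 = 3)%N].
  by case=> -[-> tm]; [constructor 1 | constructor 2 | constructor 3 | constructor 2].
elim: t => [|t IH]; first by constructor 1.
rewrite iterS /rot; case: IH => -[-> tm] /=.
- by constructor 2; rewrite oppr0; split; [|lia].
- by constructor 3; split; [|lia].
- by constructor 4; rewrite oppr0; split; [|lia].
- by constructor 1; rewrite opprK; split; [|lia].
Qed.

End Rotation.

Lemma natr_sub_norm_eq2 (R : numDomainType) (P Q : bool) (c : R) (E : Prop) :
  [\/ c = 1, c = 0 | c = -1 /\ E] -> `|P%:R - c * Q%:R| = 2 -> [/\ P, Q & E].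
Proof.
case=> [->|->|[-> e]]; case: P; case: Q => //=.
all: rewrite ?mul1r ?mul0r ?mulN1r ?subrr ?subr0 ?sub0r ?oppr0 ?addr0.
all: rewrite ?normrN ?normr0 ?normr1.
all: by move=> /eqP; rewrite eq_sym ?pnatr_eq0 ?pnatr_eq1; case.
Qed.

Section HalfSum.
Variables (C : numClosedFieldType) (l : nat) (a b : 'Z_(l.*2)).
Hypotheses (l_gt0 : (0 < l)%N) (S4 : #|[set a; - a; b; - b]| = 4%N).
Hypothesis abL : a + b = l%:R.

Local Notation L := (l%:R : 'Z_(l.*2)).
Local Notation S := [set a; - a; b; - b].

Lemma sum_S (F : 'Z_(l.*2) -> C) : \sum_(s in S) F s = F a + F (- a) + F b + F (- b).
Proof.
have memS : S =i [:: a; - a; b; - b] by move=> s; rewrite !inE -!orbA.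
have uS : uniq [:: a; - a; b; - b] by apply/card_uniqP; rewrite /= -S4; exact/esym/eq_card.
by rewrite (eq_bigl _ _ memS) -big_uniq // !big_cons big_nil /= addr0 !addrA.
Qed.

Lemma S_oppr : {in S, forall s, - s \in S}.
Proof. by move=> s; rewrite !inE -!orbA => /or4P[]/eqP->; rewrite ?opprK eqxx ?orbT. Qed.

Lemma mulrn2_b : b *+ 2 = - (a *+ 2).
Proof. by apply/eqP; rewrite -addr_eq0 -mulrnDl addrC abL (half_mulrn2 l_gt0). Qed.

Lemma mulrn2_S s : s \in S -> s *+ 2 = a *+ 2 \/ s *+ 2 = - (a *+ 2).
Proof. by rewrite !inE -!orbA => /or4P[]/eqP->; rewrite ?mulNrn ?mulrn2_b ?opprK; auto. Qed.

Lemma addL_a : a + L = - b.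
Proof. by rewrite -(oppr_half l_gt0) -abL opprD addNKr. Qed.

Lemma addL_Na : - a + L = b.
Proof. by rewrite -abL addKr. Qed.

Lemma addL_b : b + L = - a.
Proof. by rewrite -(oppr_half l_gt0) -abL opprD addrCA subrr addr0. Qed.

Lemma addL_Nb : - b + L = a.
Proof. by rewrite -abL addrC addrK. Qed.

Lemma sum_S_addL (F : 'Z_(l.*2) -> C) : \sum_(s in S) F (s + L) = \sum_(s in S) F s.
Proof. rewrite !sum_S addL_a addL_Na addL_b addL_Nb; ring. Qed.

Lemma S_mulrn2_eq0 m : a *+ 2 *+ m = 0 -> {in S, forall s, s *+ (2 * m) = 0}.
Proof.
move=> am s /mulrn2_S; rewrite mulrnA.
by case=> ->; rewrite ?mulNrn am ?oppr0.
Qed.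

Variable x : 'Z_(l.*2).

Definition delta (v : 'Z_(l.*2)) : C := (v == x)%:R - (v == x + L)%:R.

Lemma deltaDL v : delta (v + L) = - delta v.
Proof.
rewrite /delta (inj_eq (addIr L)) opprB.
by have -> : (v + L == x) = (v == x + L) by rewrite -subr_eq (oppr_half l_gt0).
Qed.

Lemma sum_delta_into w : \sum_(s in S) delta (w - s) = 0.
Proof.
(* s |-> s + L permutes S and flips the sign of delta. *)
have sumN : \sum_(s in S) delta (w - s) = - \sum_(s in S) delta (w - s).
  rewrite -[LHS]sum_S_addL -sumrN; apply: eq_bigr => s _.
  by rewrite opprD addrA (oppr_half l_gt0) deltaDL.
by apply/eqP; move/eqP: sumN; rewrite -subr_eq0 opprK -mulr2n mulrn_eq0.
Qed.

Definition free t (w u : 'Z_(l.*2)) : C :=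
  ((u - x) *+ 2 == (u - w) *+ 2 *+ t)%:R / 4.

Definition bound (p : C * C) (w u : 'Z_(l.*2)) : C :=
  (p.1 * delta u + p.2 * delta w) / 4.

Definition state t (w u : 'Z_(l.*2)) : C := free t w u + bound (iter t (@rot C) (1, 0)) w u.

Lemma free_into t w s : free t (w - s) w = ((w - x) *+ 2 == s *+ 2 *+ t)%:R / 4.
Proof. by rewrite /free subKr. Qed.

Lemma freeS t w u : free t.+1 w u = ((w - x) *+ 2 == (u - w) *+ 2 *+ t)%:R / 4.
Proof.
rewrite /free [_ *+ t.+1]mulrS.
have -> : (u - x) *+ 2 = (u - w) *+ 2 + (w - x) *+ 2 by rewrite -mulrnDl addrA subrK.
by rewrite (inj_eq (addrI _)).
Qed.

Lemma free_step t w u : u - w \in S -> Upair S (free t) w u = free t.+1 w u.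
Proof.
move=> uwS; rewrite /Upair S4 sum_S !free_into freeS /free.
have -> : w - u = - (u - w) by rewrite opprB.
rewrite !mulNrn mulrn2_b !mulNrn !opprK.
by case: (mulrn2_S uwS) => ->; rewrite ?mulNrn ?opprK; field.
Qed.

Lemma bound_step p w u : Upair S (bound p) w u = bound (rot p) w u.
Proof.
rewrite /Upair /bound -mulr_suml big_split /= -!mulr_sumr sum_delta_into sumr_const S4.
by field.
Qed.

Lemma state_step t w u : u - w \in S -> Upair S (state t) w u = state t.+1 w u.
Proof. by move=> uwS; rewrite UpairD free_step // bound_step. Qed.

Lemma sqrtC4 : sqrtC (4%:R : C) = 2.
Proof. by rewrite -(sqrCK (ler0n C 2)) expr2 -natrM. Qed.

Lemma vstateE y (e : Defs.arc S) : vstate C y e = (arc_t e == y)%:R / 2.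
Proof. by rewrite /vstate dstarE S4 sqrtC4. Qed.

Lemma vstate_state0 (e : Defs.arc S) : vstate C x e = state 0 (val e).1 (val e).2.
Proof.
rewrite vstateE /state /free /bound /delta /arc_t /= mulr0n (mulrn2_eq0 l_gt0).
rewrite subr_eq0 subr_eq (addrC L).
case: (eqVneq (val e).2 x) => [->|_] /=; last by field.
have -> : (x == x + L) = false.
  by apply/negbTE; rewrite -[X in X == _]addr0 (inj_eq (addrI x)) eq_sym (half_neq0 l_gt0).
by rewrite subr0; field.
Qed.

Lemma iter_Uop_vstate t (e : Defs.arc S) :
  iter t (@Uop C _ S) (vstate C x) e = state t (val e).1 (val e).2.
Proof. by apply: (iter_Uop_lift S_oppr vstate_state0) => t' w u; apply: state_step. Qed.

Lemma state_into_pair t y : y != x ->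
  (state t (y - a) y + state t (y + b) y) *+ 2 =
  ((y - x) *+ 2 == a *+ 2 *+ t)%:R - (iter t (@rot C) (1, 0)).1 * (y == x + L)%:R.
Proof.
move=> yx; rewrite /state -{1}(opprK b) !free_into mulNrn mulrn2_b opprK /bound.
have -> : y + b = y - a + L by rewrite -addrA addL_Na.
by rewrite deltaDL {1 3}/delta (negbTE yx) sub0r; field.
Qed.

Lemma vstate_PST_time y tau (g : C) : y != x -> `|g| = 1 ->
  (forall e, iter tau (@Uop C _ S) (vstate C x) e = g * vstate C y e) ->
  a *+ 2 *+ tau = 0 /\ (tau %% 4 = 2)%N.
Proof.
move=> yx g1 PSTg.
have aS : a \in S by rewrite !inE eqxx.
have NbS : - b \in S by rewrite !inE eqxx !orbT.
have [e1 e1E] := arc_into y aS; have [e2 e2E] := arc_into y NbS.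
have := PSTg e1; have := PSTg e2.
rewrite !iter_Uop_vstate !vstateE /arc_t e1E e2E /= opprK eqxx => E2 E1.
have sum_g : state tau (y - a) y + state tau (y + b) y = g by rewrite E1 E2 /=; field.
have norm2 : `|((y - x) *+ 2 == a *+ 2 *+ tau)%:R
                - (iter tau (@rot C) (1, 0)).1 * (y == x + L)%:R| = 2.
  by rewrite -state_into_pair // sum_g normrMn g1.
have [/eqP xy2 /eqP yE tau2] := natr_sub_norm_eq2 (iter_rot_fst C tau) norm2.
by rewrite -xy2 yE addrAC subrr add0r (half_mulrn2 l_gt0).
Qed.

End HalfSum.

Theorem lemma8p2 (C : numClosedFieldType) (l : nat) (a b : 'Z_(l.*2)) :
  (2 <= l)%N ->
  0 \notin [set a; - a; b; - b] ->
  #|[set a; - a; b; - b]| = 4%N ->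
  cconnected [set a; - a; b; - b] ->
  a + b = l%:R ->
  (l %% 4 = 0)%N ->
  ~ exists x y : 'Z_(l.*2), x != y /\
      PST (@vstate C _ [set a; - a; b; - b] x) (@vstate C _ [set a; - a; b; - b] y).
Proof.
(* [0 \notin S] is implied by [#|S| = 4]. *)
move=> l_ge2 _ S4 conn abL l4 [x [y [xy [tau [_ [g [g1 PSTg]]]]]]].
have l_gt0 : (0 < l)%N by apply: leq_trans l_ge2.
have yx : y != x by rewrite eq_sym.
have [a2tau tau2] := vstate_PST_time l_gt0 S4 abL yx g1 PSTg.
have := connected_mulrn_eq0 conn (S_mulrn2_eq0 l_gt0 abL a2tau) 1.
move/eqP; rewrite Zp_natr_eq0 ?double_gt1 // mul2n -!muln2 dvdn_pmul2r // => l_tau.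
have four_l : (4 %| l)%N by apply/eqP.
by move: (dvdn_trans four_l l_tau); rewrite /dvdn tau2.
Qed.
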